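(* Let $n\ge2$, $k\ge1$, $i_1,\dots,i_k\in\{1,\dots,n-1\}$, $j\in\{1,\dots,k\}$, and fix integers $a_h$ for $h\neq j$. For $e\in\mathbb{Z}$ let $V_n(e)=V_n(x_{i_1}^{a_1}\cdots x_{i_{j-1}}^{a_{j-1}}x_{i_j}^{e}x_{i_{j+1}}^{a_{j+1}}\cdots x_{i_k}^{a_k})$. Then for all sufficiently large $e$, $V_n(e)$ is a polynomial in $s$, and $\lim_{e\to\infty}\deg V_n(e)=+\infty$.
   Context: $\mathcal{B}_n$ is the Artin braid group with standard generators $x_1,\dots,x_{n-1}$; $\widehat{\beta}$ is the closure of a braid. The Jones polynomial is normalized by $V(\text{unknot})=1$ and $q^{-1}V_{L_+}-qV_{L_-}=(q^{1/2}-q^{-1/2})V_{L_0}$; with $s=q^{-1/2}$ it is a Laurent polynomial in $s$, and $V_n(\beta)=V(\widehat\beta)$. Conventions: closures of $\alpha x_i^{e+2}\gamma$, $\alpha x_i^{e+1}\gamma$, $\alpha x_i^{e}\gamma$ play the roles of $L_-,L_0,L_+$ (e.g. $V_2(x_1^2)=-s-s^5$). For a nonzero Laurent polynomial, $\deg$ is its highest exponent of $s$. *)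

From HB Require Import structures.
From mathcomp Require Import all_boot all_order all_algebra fraction.
Set Implicit Arguments. Unset Strict Implicit. Unset Printing Implicit Defensive.
Import Order.TTheory GRing.Theory Num.Theory.
Local Open Scope ring_scope.

(* Braid words.  A letter (i, true) stands for the Artin generator x_i and   *)
(* (i, false) for x_i^{-1}; strands are numbered 0..n-1 and x_i (1 <= i <=   *)
(* n-1) crosses strands i-1 and i.                                           *)
Definition letter := (nat * bool)%type.

Definition gpow (i : nat) (a : int) : seq letter := nseq `|a|%N (i, (0 <= a)).

Definition bword (k : nat) (i : 'I_k -> nat) (a : 'I_k -> int) : seq letter :=
  flatten [seq gpow (i h) (a h) | h <- enum 'I_k].

(* A state S : (size w).-tuple bool assigns to crossing t the A-smoothing    *)
(* (true) or the B-smoothing (false).  For a letter x_i (a NEGATIVE crossing *)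
(* in the convention of the paper, where x_i^{e+2}, x_i^{e+1}, x_i^{e} give  *)
(* L_-, L_0, L_+) the A-smoothing is the horizontal (cup/cap) one, for       *)
(* x_i^{-1} it is the vertical (identity) one.                               *)
Section Closure.
Variables (n : nat) (w : seq letter).
Let m := size w.
Variable S : m.-tuple bool.

Definition gen_at (t : nat) : nat := (nth (0%N, true) w t).1.
Definition sgn_at (t : nat) : bool := (nth (0%N, true) w t).2.
(* crossing t is smoothed horizontally (cup at level t, cap at level t+1) *)
Definition hor (t : nat) : bool := (t < m)%N && (nth false S t == sgn_at t).
Definition inv (t p : nat) : bool := (p == (gen_at t).-1) || (p == gen_at t).

(* vertices: points (t, p) at level t in 0..m on strand p; level m is glued  *)
(* back to level 0 by the closure arcs.                                     *)
Definition sm_edge0 (u v : 'I_m.+1 * 'I_n) : bool :=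
  let t := nat_of_ord u.1 in let p := nat_of_ord u.2 in
  let t' := nat_of_ord v.1 in let p' := nat_of_ord v.2 in
  [|| [&& t == m, t' == 0%N & p == p'],
      [&& t' == t.+1, p == p' & ~~ (hor t && inv t p)],
      [&& t' == t, hor t, inv t p, inv t p' & p != p']        (* cup at level t *)
    | [&& t' == t, (0 < t)%N, hor t.-1, inv t.-1 p, inv t.-1 p' & p != p'] ].
                                                            (* cap at level t *)
Definition sm_edge : rel ('I_m.+1 * 'I_n) :=
  fun u v => sm_edge0 u v || sm_edge0 v u.

Definition nloops : nat := n_comp sm_edge predT.
End Closure.

(* Laurent polynomials in s are viewed inside the fraction field of Z[s]. *)
Notation laurent := {fraction {poly int}}.
Definition tof (P : {poly int}) : laurent := @FracField.tofrac _ P.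
Definition svar : laurent := tof 'X.

(* Jones polynomial V_n(w) = V(closure of w) in the variable s = q^{-1/2}   *)
(* (so A^2 = s for the Kauffman variable A):                                *)
(*   V = (-A^3)^{-wr} sum_S A^{#A - #B} delta^{L(S)-1},  delta = -A^2-A^-2,  *)
(* where wr = #x_i^{-1} - #x_i is the writhe.  With p = #x_i^{-1} and       *)
(* q = #x_i letters one has (#A - #B - 3 wr)/2 = #A - 2p + q.               *)
Definition jones (n : nat) (w : seq letter) : laurent :=
  let m := size w in
  let q : int := (count (fun l : letter => l.2) w)%:Z in
  let p : int := (count (fun l : letter => ~~ l.2) w)%:Z in
  let wr : int := p - q in
  let delta : laurent := - (svar + svar^-1) in
  \sum_(S : m.-tuple bool)
     ((-1) ^ wr * svar ^ ((count id S)%:Z - 2 * p + q)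
      * delta ^+ (nloops n S).-1).

Definition is_poly_in_s (L : laurent) : Prop :=
  exists P : {poly int}, L = tof P.

Definition has_sdeg (L : laurent) (d : int) : Prop :=
  exists (P : {poly int}) (c : int),
    [/\ P != 0, L = svar ^ c * tof P & d = c + ((size P)%:Z - 1)].

From Pilot Require Import Defs.
From HB Require Import structures.
From mathcomp Require Import all_boot all_order all_algebra fraction.
From mathcomp Require Import zify ring.
From Stdlib Require Import Classical.
Import Order.TTheory GRing.Theory Num.Theory.
Set Implicit Arguments. Unset Strict Implicit. Unset Printing Implicit Defensive.

(* Write the word as [al x_g^e ga].  In the Kauffman state sum every B-smoothed
   crossing of the block x_g^e simply disappears, and every A-smoothed one after
   the first adds a small loop; summing over the states of the block with the
   binomial identity [1 + s delta = -s^2] gives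
     V(e) = (-s)^e (V_base + s (1 - s^2 + ... + (-s^2)^(e-1)) V_one)
   for two Laurent polynomials [V_base = V(0)] and [V_one].  Clearing
   denominators, [s^N V(e) = (-s)^e Q_e] with [Q_e = B + s G_e E] in [Z[s]],
   where the polynomials [G_e] are pairwise distinct, so at most one [Q_e]
   vanishes unless [B = E = 0]; and [B <> 0] since [V(0) <> 0], as one sees by
   evaluating at [s = 2] over [F_7].  Hence [V(e)] is a polynomial of degree at
   least [e - N] for [e] large. *)

(* The smoothing of a closed braid diagram, read off a state given as a plain
   bit sequence [s] and with vertices addressed by natural coordinates
   (level [t], strand [p]); this is [sm_edge] with the dependent types removed. *)
Definition hor_seq (w : seq letter) (s : seq bool) (t : nat) : bool :=
  (t < size w) && (nth false s t == sgn_at w t).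

Definition smarc w s (t p t' p' : nat) : bool :=
  [|| [&& t == size w, t' == 0 & p == p'],
      [&& t' == t.+1, p == p' & ~~ (hor_seq w s t && Defs.inv w t p)],
      [&& t' == t, hor_seq w s t, Defs.inv w t p, Defs.inv w t p' & p != p']
    | [&& t' == t, 0 < t, hor_seq w s t.-1, Defs.inv w t.-1 p,
          Defs.inv w t.-1 p' & p != p'] ].

Definition smgraph n w s : rel ('I_(size w).+1 * 'I_n) :=
  fun u v => smarc w s u.1 u.2 v.1 v.2 || smarc w s v.1 v.2 u.1 u.2.
Arguments smgraph : clear implicits.

Definition loops n w s := n_comp (smgraph n w s) predT.

(* The counting half of [adjunction_n_comp], with the adjunction spelled out. *)
Lemma n_comp_transfer (T T' : finType) (e : rel T) (e' : rel T')
    (h : T' -> T) (h' : T -> T') (a : {pred T}) :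
  symmetric e -> symmetric e' -> closed e a -> (forall x', h x' \in a) ->
  (forall x, x \in a -> connect e x (h (h' x))) ->
  (forall x y, x \in a -> y \in a -> e x y -> connect e' (h' x) (h' y)) ->
  (forall x', connect e' x' (h' (h x'))) ->
  (forall x' y', e' x' y' -> connect e (h x') (h y')) ->
  n_comp e a = n_comp e' predT.
Proof.
move=> se se' cla ha hh' h'_conn h'h h_conn.
have sce := sym_connect_sym se; have sce' := sym_connect_sym se'.
rewrite (adjunction_n_comp h sce sce' cla); last first.
  apply: (@intro_adjunction _ _ h e e' sce' a cla (fun x _ => h' x)).
  - by move=> x ax; split; [exact: hh' | move=> y ay; exact: h'_conn].
  - by move=> x' _; split; [exact: h'h | exact: h_conn].
by apply: eq_n_comp_r => x; rewrite !inE ha.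
Qed.

Section Linked.
Variables (n : nat) (w : seq letter) (s : seq bool).

Definition vtx t p : 'I_(size w).+1 * 'I_n.+1 := (inord t, inord p).
Definition linked t p t' p' := connect (smgraph n.+1 w s) (vtx t p) (vtx t' p').

Lemma vtxK (x : 'I_(size w).+1 * 'I_n.+1) : vtx x.1 x.2 = x.
Proof. by case: x => a b; rewrite /vtx !inord_val. Qed.

Lemma smgraph_sym : symmetric (smgraph n.+1 w s).
Proof. by move=> x y; rewrite /smgraph orbC. Qed.

Lemma linked_arc t p t' p' : t <= size w -> p <= n -> t' <= size w -> p' <= n ->
  smarc w s t p t' p' -> linked t p t' p'.
Proof.
move=> ht hp ht' hp' he; apply: connect1.
by rewrite /smgraph /vtx /= !inordK ?ltnS // he.
Qed.

Lemma linked_sym t p t' p' : linked t p t' p' -> linked t' p' t p.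
Proof. by rewrite /linked (sym_connect_sym smgraph_sym). Qed.

Lemma linked_trans t p t1 p1 t' p' :
  linked t p t1 p1 -> linked t1 p1 t' p' -> linked t p t' p'.
Proof. exact: connect_trans. Qed.

Lemma linked_refl t p : linked t p t p.
Proof. exact: connect0. Qed.

Lemma linked_closure p : p <= n -> linked (size w) p 0 p.
Proof. by move=> hp; apply: linked_arc => //; rewrite /smarc !eqxx. Qed.

Lemma linked_vert t p : t < size w -> p <= n ->
  ~~ (hor_seq w s t && Defs.inv w t p) -> linked t p t.+1 p.
Proof.
move=> ht hp hv; apply: linked_arc => //; first exact: ltnW.
by rewrite /smarc !eqxx hv /= orbT.
Qed.

Lemma hor_seq_lt t : hor_seq w s t -> t < size w.
Proof. by case/andP. Qed.

Lemma linked_cup t p p' : p <= n -> p' <= n -> hor_seq w s t ->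
  Defs.inv w t p -> Defs.inv w t p' -> p != p' -> linked t p t p'.
Proof.
move=> hp hp' hh h1 h2 h3; have ht := ltnW (hor_seq_lt hh).
by apply: linked_arc => //; rewrite /smarc hh h1 h2 h3 eqxx /= !orbT.
Qed.

Lemma linked_cap c p p' : p <= n -> p' <= n -> hor_seq w s c ->
  Defs.inv w c p -> Defs.inv w c p' -> p != p' -> linked c.+1 p c.+1 p'.
Proof.
move=> hp hp' hh h1 h2 h3; have ht := hor_seq_lt hh.
by apply: linked_arc => //; rewrite /smarc /= hh h1 h2 h3 eqxx /= !orbT.
Qed.

Variant smarc_spec t p t' p' : Prop :=
| SmarcClosure of t = size w & t' = 0 & p' = p
| SmarcVert of t' = t.+1 & p' = p & ~~ (hor_seq w s t && Defs.inv w t p)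
| SmarcCup of t' = t & hor_seq w s t & Defs.inv w t p & Defs.inv w t p' & p != p'
| SmarcCap c of t = c.+1 & t' = c.+1 & hor_seq w s c & Defs.inv w c p
    & Defs.inv w c p' & p != p'.

Lemma smarcP t p t' p' : smarc w s t p t' p' -> smarc_spec t p t' p'.
Proof.
rewrite /smarc; case/or4P.
- by case/and3P => /eqP -> /eqP -> /eqP ->; apply: SmarcClosure.
- by case/and3P => /eqP -> /eqP -> ?; apply: SmarcVert.
- by case/and5P => /eqP -> *; apply: SmarcCup.
- case/and5P => /eqP -> ht h1 h2 /andP[h3 h4].
  by case: t ht h1 h2 h3 => // c _ *; apply: (@SmarcCap _ _ _ _ c).
Qed.

End Linked.

Lemma loops_transfer n w s w' s' (f g : nat -> nat) (a : nat -> nat -> bool) :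
  (forall t, t <= size w' -> f t <= size w) ->
  (forall t, t <= size w -> g t <= size w') ->
  (forall t p t' p', t <= size w -> p <= n -> t' <= size w -> p' <= n ->
     smarc w s t p t' p' -> a t p = a t' p') ->
  (forall t p, t <= size w' -> p <= n -> a (f t) p) ->
  (forall t p, t <= size w -> p <= n -> a t p -> linked n w s t p (f (g t)) p) ->
  (forall t p t' p', t <= size w -> p <= n -> t' <= size w -> p' <= n ->
     a t p -> a t' p' -> smarc w s t p t' p' -> linked n w' s' (g t) p (g t') p') ->
  (forall t p, t <= size w' -> p <= n -> linked n w' s' t p (g (f t)) p) ->
  (forall t p t' p', t <= size w' -> p <= n -> t' <= size w' -> p' <= n ->
     smarc w' s' t p t' p' -> linked n w s (f t) p (f t') p') ->
  n_comp (smgraph n.+1 w s) [pred x : 'I_(size w).+1 * 'I_n.+1 | a x.1 x.2]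
    = loops n.+1 w' s'.
Proof.
move=> hf hg hcl ha fg_conn g_conn gf_conn f_conn.
have bd (m : nat) (x : 'I_m.+1) : x <= m by rewrite -ltnS.
apply: (@n_comp_transfer _ _ _ _
  (fun x : 'I_(size w').+1 * 'I_n.+1 => vtx n w (f x.1) x.2)
  (fun x : 'I_(size w).+1 * 'I_n.+1 => vtx n w' (g x.1) x.2)).
- exact: smgraph_sym.
- exact: smgraph_sym.
- move=> x y; rewrite /smgraph !inE => /orP[] he; first by apply: hcl; rewrite ?bd.
  by apply/esym; apply: hcl; rewrite ?bd.
- move=> x; rewrite inE /vtx /= !inordK ?ltnS ?bd //; first by apply: ha; rewrite ?bd.
  by apply: hf; rewrite ?bd.
- move=> x ax /=; rewrite inord_val.
  have -> : (inord (g x.1) : 'I_(size w').+1) = g x.1 :> nat.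
    by rewrite inordK // ltnS hg ?bd.
  by rewrite -{1}(vtxK x); apply: fg_conn; rewrite ?bd.
- move=> x y ax ay; rewrite inE in ax ay; rewrite /smgraph => /orP[] he.
    by apply: g_conn; rewrite ?bd.
  by apply: linked_sym; apply: g_conn; rewrite ?bd.
- move=> x /=; rewrite inord_val.
  have -> : (inord (f x.1) : 'I_(size w).+1) = f x.1 :> nat.
    by rewrite inordK // ltnS hf ?bd.
  by rewrite -{1}(vtxK x); apply: gf_conn; rewrite ?bd.
- move=> x y; rewrite /smgraph => /orP[] he; first by apply: f_conn; rewrite ?bd.
  by apply: linked_sym; apply: f_conn; rewrite ?bd.
Qed.

Ltac case_ifs := repeat match goal with
 | |- context [if ?b then _ else _] =>
     let E := fresh "E" in destruct b eqn:E; try (exfalso; lia)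
 | H : context [if ?b then _ else _] |- _ =>
     let E := fresh "E" in destruct b eqn:E; try (exfalso; lia)
end.

(* Level maps between a word with one crossing removed and the original word. *)
Definition ins_level (r t : nat) := if t <= r then t else t.+1.
Definition del_level (r t : nat) := if t <= r then t else t.-1.

Lemma del_ins_level r t : del_level r (ins_level r t) = t.
Proof. rewrite /ins_level; case: leqP => h; rewrite /del_level; case_ifs; lia. Qed.

Section DeleteVertical.
Variables (n : nat) (w w' : seq letter) (s s' : seq bool) (r : nat).
Hypothesis vert_r : hor_seq w s r = false.

Lemma linked_ins_del_vertical t p : t <= size w -> p <= n ->
  linked n w s t p (ins_level r (del_level r t)) p.
Proof.
move=> ht hp; rewrite /ins_level /del_level.
case: (leqP t r) => h1; first by rewrite h1; apply: linked_refl.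
case: (ltngtP t r.+1) => h2; [lia | |].
- have -> : t.-1 <= r = false by lia.
  have -> : t.-1.+1 = t by lia.
  exact: linked_refl.
- subst t; rewrite /= leqnn; apply: linked_sym; apply: linked_vert => //.
  by rewrite vert_r.
Qed.

Hypothesis size_w : size w = (size w').+1.
Hypothesis r_lt : r < size w.
Hypothesis hor_w' : forall t, hor_seq w' s' t = hor_seq w s (if t < r then t else t.+1).
Hypothesis inv_w' : forall t p, Defs.inv w' t p = Defs.inv w (if t < r then t else t.+1) p.

Lemma linked_del_vertical t p t' p' : t <= size w -> p <= n -> t' <= size w ->
  p' <= n -> smarc w s t p t' p' ->
  linked n w' s' (del_level r t) p (del_level r t') p'.
Proof.
move=> ht hp ht' hp' /smarcP [].
- move=> ? ? ?; subst; rewrite /del_level; case_ifs.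
  have -> : (size w).-1 = size w' by lia.
  exact: linked_closure.
- move=> ? ? hv; subst; rewrite /del_level; case: (ltngtP t r) => h1.
  + case_ifs; apply: linked_vert => //; first lia.
    by rewrite hor_w' inv_w'; case_ifs.
  + destruct t as [|c]; first lia; case_ifs; rewrite /=.
    apply: linked_vert => //; first lia.
    by rewrite hor_w' inv_w'; case_ifs.
  + by subst t; case_ifs; apply: linked_refl.
- move=> ? hh h1 h2 h3; subst; rewrite /del_level; case: (ltngtP t r) => e1.
  + by case_ifs; apply: linked_cup => //; rewrite ?hor_w' ?inv_w'; case_ifs.
  + destruct t as [|c]; first lia; case_ifs; rewrite /=.
    by apply: linked_cup => //; rewrite ?hor_w' ?inv_w'; case_ifs.
  + by subst t; rewrite vert_r in hh.
- move=> c ? ? hh h1 h2 h3; subst; rewrite /del_level; case: (ltngtP c r) => e1.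
  + by case_ifs; apply: linked_cap => //; rewrite ?hor_w' ?inv_w'; case_ifs.
  + destruct c as [|c]; first lia; case_ifs; rewrite /=.
    by apply: linked_cap => //; rewrite ?hor_w' ?inv_w'; case_ifs.
  + by subst c; rewrite vert_r in hh.
Qed.

Lemma linked_ins_vertical t p t' p' : t <= size w' -> p <= n -> t' <= size w' ->
  p' <= n -> smarc w' s' t p t' p' ->
  linked n w s (ins_level r t) p (ins_level r t') p'.
Proof.
move=> ht hp ht' hp' /smarcP [].
- move=> ? ? ?; subst; rewrite /ins_level; case_ifs.
  + have e1 : r = size w' by lia.
    apply: (@linked_trans _ _ _ _ _ (size w) p); last exact: linked_closure.
    rewrite size_w; apply: linked_vert => //; first lia.
    by rewrite -e1 vert_r.
  + by rewrite -size_w; apply: linked_closure.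
- move=> ? ? hv; subst; rewrite hor_w' inv_w' in hv; rewrite /ins_level.
  case: (ltngtP t r) => e1.
  + by case_ifs; apply: linked_vert => //; lia.
  + by case_ifs; apply: linked_vert => //; lia.
  + subst t; case_ifs.
    apply: (@linked_trans _ _ _ _ _ r.+1 p).
      by apply: linked_vert => //; rewrite vert_r.
    by apply: linked_vert => //; lia.
- move=> ? hh h1 h2 h3; subst; rewrite ?hor_w' ?inv_w' in hh h1 h2; rewrite /ins_level.
  case: (ltngtP t r) => e1.
  + by case_ifs; apply: linked_cup.
  + by case_ifs; apply: linked_cup.
  + subst t; case_ifs.
    apply: (@linked_trans _ _ _ _ _ r.+1 p).
      by apply: linked_vert => //; rewrite vert_r.
    apply: (@linked_trans _ _ _ _ _ r.+1 p'); first by apply: linked_cup.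
    by apply: linked_sym; apply: linked_vert => //; rewrite vert_r.
- move=> c ? ? hh h1 h2 h3; subst; rewrite ?hor_w' ?inv_w' in hh h1 h2.
  by rewrite /ins_level; case: (ltnP c r) => e1; case_ifs; apply: linked_cap.
Qed.

Lemma loops_delete_vertical : loops n.+1 w s = loops n.+1 w' s'.
Proof.
rewrite /loops (@eq_n_comp_r _ _ _
  [pred x : 'I_(size w).+1 * 'I_n.+1 | (fun _ _ => true) x.1 x.2]) //.
apply: (@loops_transfer n w s w' s' (ins_level r) (del_level r) (fun _ _ => true)) => //.
- by move=> t ht; rewrite /ins_level; case_ifs; lia.
- by move=> t ht; rewrite /del_level; case_ifs; lia.
- by move=> t p ht hp _; apply: linked_ins_del_vertical.
- by move=> t p t' p' ht hp ht' hp' _ _; apply: linked_del_vertical.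
- by move=> t p _ _; rewrite del_ins_level; apply: linked_refl.
- exact: linked_ins_vertical.
Qed.

End DeleteVertical.

(* Crossings [r] and [r+1] are equal letters, both smoothed horizontally: the
   cap of [r] and the cup of [r+1] form a small loop at level [r+1]; removing
   crossing [r+1] removes exactly that loop. *)
Section DeleteHorizontal.
Variables (n : nat) (w w' : seq letter) (s s' : seq bool) (r : nat).
Hypothesis hor_r : hor_seq w s r.
Hypothesis hor_r1 : hor_seq w s r.+1.
Hypothesis inv_r1 : forall p, Defs.inv w r.+1 p = Defs.inv w r p.

Definition on_small_loop t p := (t == r.+1) && Defs.inv w r p.

Lemma on_small_loop_arc t p t' p' :
  smarc w s t p t' p' -> on_small_loop t p = on_small_loop t' p'.
Proof.
rewrite /on_small_loop; case/smarcP => [? ? ?|? ? hv|? hh h1 h2 h3|c ? ? hh h1 h2 h3]; subst.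
- have r1_lt := hor_seq_lt hor_r1.
  by have -> : (size w == r.+1) = false by apply/negbTE; lia.
- have -> : (t == r.+1) && Defs.inv w r p = false.
    case: eqP => // ?; subst; move: hv; rewrite hor_r1 inv_r1 /=.
    by case: (Defs.inv w r p).
  case: eqP => //= -[?]; subst; move: hv; rewrite hor_r /=; by case: (Defs.inv w r p).
- by case: eqP => //= ?; subst; rewrite -!inv_r1 h1 h2.
- by case: eqP => //= -[?]; subst; rewrite h1 h2.
Qed.

Let small_loop := [pred x : 'I_(size w).+1 * 'I_n.+1 | on_small_loop x.1 x.2].

Lemma small_loop_closed : closed (smgraph n.+1 w s) small_loop.
Proof.
move=> x y; rewrite /smgraph !inE => /orP[] he; first exact: on_small_loop_arc.
by apply/esym; apply: on_small_loop_arc.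
Qed.

Lemma linked_ins_del_horizontal t p : t <= size w -> p <= n ->
  ~~ on_small_loop t p -> linked n w s t p (ins_level r (del_level r t)) p.
Proof.
move=> ht hp hL; rewrite /ins_level /del_level; case: (ltngtP t r.+1) => et.
- by case_ifs; apply: linked_refl.
- case_ifs; have -> : t.-1.+1 = t by lia.
  exact: linked_refl.
- subst t; case_ifs; rewrite /on_small_loop eqxx /= in hL.
  by apply: linked_sym; apply: linked_vert => //=; rewrite hor_r.
Qed.

Hypothesis gen_r : 1 <= gen_at w r <= n.

Lemma n_comp_small_loop : n_comp (smgraph n.+1 w s) small_loop = 1.
Proof.
have r1_lt := hor_seq_lt hor_r1.
have sG := sym_connect_sym (@smgraph_sym n w s).
set g0 := gen_at w r.
have inv_r p : Defs.inv w r p = (p == g0.-1) || (p == g0) by [].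
rewrite -(n_comp_connect sG (vtx n w r.+1 g0.-1)); apply: eq_n_comp_r => y.
rewrite !inE; apply/idP/idP => hy.
- rewrite -(vtxK y); move: hy; rewrite /on_small_loop => /andP[/eqP e1].
  rewrite inv_r e1 => /orP[] /eqP ->; first exact: linked_refl.
  apply: linked_cup => //; first lia; first lia; first by rewrite inv_r1 inv_r eqxx.
    by rewrite inv_r1 inv_r eqxx orbT.
  lia.
- have := closed_connect small_loop_closed hy.
  rewrite !inE /vtx /= !inordK ?ltnS /on_small_loop; try lia.
  by move=> <-; rewrite eqxx inv_r eqxx.
Qed.

Hypothesis size_w : size w = (size w').+1.
Hypothesis hor_w' : forall t, hor_seq w' s' t = hor_seq w s (if t < r.+1 then t else t.+1).
Hypothesis inv_w' : forall t p,
  Defs.inv w' t p = Defs.inv w (if t < r.+1 then t else t.+1) p.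

Lemma linked_del_horizontal t p t' p' : t <= size w -> p <= n -> t' <= size w ->
  p' <= n -> ~~ on_small_loop t p -> smarc w s t p t' p' ->
  linked n w' s' (del_level r t) p (del_level r t') p'.
Proof.
have r1_lt := hor_seq_lt hor_r1.
move=> ht hp ht' hp' off /smarcP [].
- move=> ? ? ?; subst; rewrite /del_level; case_ifs.
  have -> : (size w).-1 = size w' by lia.
  exact: linked_closure.
- move=> ? ? hv; subst; rewrite /del_level; case: (ltngtP t r) => e1.
  + case_ifs; apply: linked_vert => //; first lia.
    by rewrite hor_w' inv_w'; case_ifs.
  + destruct t as [|c]; first lia.
    case: (ltngtP c r) => e2; first lia.
    * case_ifs; rewrite /=; apply: linked_vert => //; first lia.
      by rewrite hor_w' inv_w'; case_ifs.
    * subst; case_ifs; rewrite /=; apply: linked_vert => //; first lia.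
      by rewrite hor_w' inv_w'; case_ifs; rewrite -inv_r1; move: hv; rewrite hor_r1 hor_r.
  + by subst t; case_ifs; apply: linked_refl.
- move=> ? hh h1 h2 h3; subst; rewrite /del_level; case: (ltngtP t r.+1) => e1.
  + by case_ifs; apply: linked_cup => //; rewrite ?hor_w' ?inv_w'; case_ifs.
  + destruct t as [|c]; first lia; case_ifs; rewrite /=.
    by apply: linked_cup => //; rewrite ?hor_w' ?inv_w'; case_ifs.
  + by subst t; move: off; rewrite /on_small_loop eqxx -inv_r1 h1.
- move=> c ? ? hh h1 h2 h3; subst; rewrite /del_level; case: (ltngtP c r) => e1.
  + by case_ifs; apply: linked_cap => //; rewrite ?hor_w' ?inv_w'; case_ifs.
  + destruct c as [|c]; first lia.
    case: (ltngtP c r) => e2; first lia.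
    * by case_ifs; rewrite /=; apply: linked_cap => //; rewrite ?hor_w' ?inv_w'; case_ifs.
    * subst; case_ifs; rewrite /=; apply: linked_cap => //; rewrite ?hor_w' ?inv_w';
        case_ifs; by rewrite // -inv_r1.
  + by subst c; move: off; rewrite /on_small_loop eqxx h1.
Qed.

Lemma linked_ins_horizontal t p t' p' : t <= size w' -> p <= n -> t' <= size w' ->
  p' <= n -> smarc w' s' t p t' p' ->
  linked n w s (ins_level r t) p (ins_level r t') p'.
Proof.
have r1_lt := hor_seq_lt hor_r1.
move=> ht hp ht' hp' /smarcP [].
- move=> ? ? ?; subst; rewrite /ins_level; case_ifs.
  by rewrite -size_w; apply: linked_closure.
- move=> ? ? hv; subst; rewrite hor_w' inv_w' in hv; rewrite /ins_level.
  case: (ltngtP t r) => e1.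
  + by case_ifs; apply: linked_vert => //; lia.
  + by case_ifs; apply: linked_vert => //; lia.
  + subst t; case_ifs.
    apply: (@linked_trans _ _ _ _ _ r.+1 p); first by apply: linked_vert => //; lia.
    apply: linked_vert; [lia | done | ].
    by rewrite hor_r1 inv_r1; move: hv; rewrite hor_r.
- move=> ? hh h1 h2 h3; subst; rewrite ?hor_w' ?inv_w' in hh h1 h2; rewrite /ins_level.
  by case_ifs; apply: linked_cup.
- move=> c ? ? hh h1 h2 h3; subst; rewrite ?hor_w' ?inv_w' in hh h1 h2; rewrite /ins_level.
  case: (ltngtP c r) => e1.
  + by case_ifs; apply: linked_cap.
  + by case_ifs; apply: linked_cap.
  + by subst; case_ifs; apply: linked_cap; rewrite ?inv_r1.
Qed.

Lemma loops_off_small_loop :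
  n_comp (smgraph n.+1 w s) [predC small_loop] = loops n.+1 w' s'.
Proof.
have r1_lt := hor_seq_lt hor_r1.
rewrite (@eq_n_comp_r _ _ _ [pred x : 'I_(size w).+1 * 'I_n.+1 |
  (fun t p => ~~ on_small_loop t p) x.1 x.2]) //.
apply: (@loops_transfer n w s w' s' (ins_level r) (del_level r)
  (fun t p => ~~ on_small_loop t p)) => //.
- by move=> t ht; rewrite /ins_level; case_ifs; lia.
- by move=> t ht; rewrite /del_level; case_ifs; lia.
- by move=> t p t' p' _ _ _ _ /on_small_loop_arc ->.
- move=> t p _ _; rewrite /ins_level /on_small_loop.
  by case_ifs; apply/negP => /andP[/eqP ? _]; lia.
- by move=> t p ht hp off; apply: linked_ins_del_horizontal.
- by move=> t p t' p' ht hp ht' hp' off _; apply: linked_del_horizontal.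
- by move=> t p _ _; rewrite del_ins_level; apply: linked_refl.
- by move=> t p t' p' ht hp ht' hp' e; apply: linked_ins_horizontal.
Qed.

Lemma loops_delete_horizontal : loops n.+1 w s = (loops n.+1 w' s').+1.
Proof.
rewrite -loops_off_small_loop -[RHS]add1n -n_comp_small_loop -n_compC.
exact: eq_n_comp_r.
Qed.

End DeleteHorizontal.

Lemma nth_cat_skip (T : Type) (x0 : T) (u v : seq T) y t :
  nth x0 (u ++ v) t = nth x0 (u ++ y :: v) (if t < size u then t else t.+1).
Proof.
rewrite !nth_cat; case: (ltnP t (size u)) => h; first by rewrite h.
have -> : (t.+1 < size u) = false by lia.
by have -> : t.+1 - size u = (t - size u).+1 by lia.
Qed.

Lemma loops_drop_vertical n (u v : seq letter) l (s1 s2 : seq bool) b :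
  size s1 = size u -> b != l.2 ->
  loops n.+1 (u ++ l :: v) (s1 ++ b :: s2) = loops n.+1 (u ++ v) (s1 ++ s2).
Proof.
move=> hs hb; apply: (@loops_delete_vertical n _ _ _ _ (size u)).
- by rewrite /hor_seq /sgn_at !nth_cat hs ltnn subnn /= (negbTE hb) andbF.
- by rewrite !size_cat /=; lia.
- by rewrite size_cat /=; lia.
- move=> t; rewrite /hor_seq /sgn_at (nth_cat_skip _ _ _ l) (nth_cat_skip _ _ _ b).
  rewrite hs !size_cat /=; congr (_ && _).
  by case: ifP => hc; apply/idP/idP => ?; lia.
- by move=> t p; rewrite /Defs.inv /gen_at (nth_cat_skip _ _ _ l).
Qed.

Lemma loops_drop_horizontal n (u v : seq letter) l (s1 s2 : seq bool) :
  size s1 = size u -> 1 <= l.1 <= n ->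
  loops n.+1 (u ++ l :: l :: v) (s1 ++ l.2 :: l.2 :: s2)
    = (loops n.+1 (u ++ l :: v) (s1 ++ l.2 :: s2)).+1.
Proof.
move=> hs hl.
have ew : u ++ l :: l :: v = (u ++ [:: l]) ++ l :: v by rewrite -catA.
have ew' : u ++ l :: v = (u ++ [:: l]) ++ v by rewrite -catA.
have es : s1 ++ l.2 :: l.2 :: s2 = (s1 ++ [:: l.2]) ++ l.2 :: s2 by rewrite -catA.
have es' : s1 ++ l.2 :: s2 = (s1 ++ [:: l.2]) ++ s2 by rewrite -catA.
have hsu : size (u ++ [:: l]) = (size u).+1 by rewrite size_cat addn1.
have hss : size (s1 ++ [:: l.2]) = (size u).+1 by rewrite size_cat addn1 hs.
have nth_w k : k <= 1 -> nth (0, true) (u ++ l :: l :: v) (size u + k) = l.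
  by move=> hk; rewrite nth_cat ltnNge leq_addr /= addKn; case: k hk => [|[]].
have nth_s k : k <= 1 -> nth false (s1 ++ l.2 :: l.2 :: s2) (size u + k) = l.2.
  by move=> hk; rewrite nth_cat hs ltnNge leq_addr /= addKn; case: k hk => [|[]].
have w0 := nth_w 0 isT; have w1 := nth_w 1 isT.
have s0 := nth_s 0 isT; have s1' := nth_s 1 isT.
rewrite addn0 in w0 s0; rewrite addn1 in w1 s1'.
apply: (@loops_delete_horizontal n _ _ _ _ (size u)).
- by rewrite /hor_seq /sgn_at w0 s0 eqxx andbT size_cat /=; lia.
- by rewrite /hor_seq /sgn_at w1 s1' eqxx andbT size_cat /=; lia.
- by move=> p; rewrite /Defs.inv /gen_at w0 w1.
- by rewrite /gen_at w0.
- by rewrite !size_cat /=; lia.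
- move=> t; rewrite ew es ew' es' /hor_seq /sgn_at.
  rewrite (nth_cat_skip _ _ _ l) (nth_cat_skip _ _ _ l.2) hss hsu !size_cat /=.
  by congr (_ && _); case: ifP => hc; apply/idP/idP => ?; lia.
- by move=> t p; rewrite ew ew' /Defs.inv /gen_at (nth_cat_skip _ _ _ l) hsu.
Qed.

Lemma loops_power n (al ga : seq letter) g (s1 s2 : seq bool) (tau : seq bool) :
  size s1 = size al -> 1 <= g <= n ->
  loops n.+1 (al ++ nseq (size tau) (g, true) ++ ga) (s1 ++ tau ++ s2) =
  if count id tau == 0 then loops n.+1 (al ++ ga) (s1 ++ s2)
  else loops n.+1 (al ++ (g, true) :: ga) (s1 ++ true :: s2) + (count id tau).-1.
Proof.
move=> hs hg; set x := (g, true).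
elim: (size tau).+1 {-2}tau (ltnSn (size tau)) => // k IH [|b t] /=; first by rewrite ltnS.
rewrite ltnS => hk; case: b => /=; last first.
  by rewrite (@loops_drop_vertical n al (nseq (size t) x ++ ga) x s1 (t ++ s2) false) ?IH.
case: t hk => [|[] t] hk /=; first by rewrite addn0 addn0.
  rewrite (@loops_drop_horizontal n al (nseq (size t) x ++ ga) x s1 (t ++ s2)) //.
  by have := IH (true :: t) hk; rewrite /= => ->; rewrite !add0n add1n addnS.
have -> : al ++ [:: x, x & nseq (size t) x ++ ga]
  = (al ++ [:: x]) ++ x :: (nseq (size t) x ++ ga) by rewrite -catA.
have -> : s1 ++ [:: true, false & t ++ s2]
  = (s1 ++ [:: true]) ++ false :: (t ++ s2) by rewrite -catA.
rewrite loops_drop_vertical ?size_cat ?hs // -!catA /=.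
by have := IH (true :: t) hk; rewrite /= => ->; rewrite !add0n.
Qed.

Local Open Scope ring_scope.

Lemma sum_tuple_cons (R : nmodType) k (F : seq bool -> R) :
  \sum_(S : k.+1.-tuple bool) F S
    = \sum_(S : k.-tuple bool) (F (false :: S) + F (true :: S)).
Proof.
rewrite (reindex (fun p : bool * k.-tuple bool => [tuple of p.1 :: p.2])) /=; last first.
  exists (fun S : k.+1.-tuple bool => (thead S, [tuple of behead S])).
  - by case=> b t _ /=; congr (_, _); apply: val_inj.
  - by move=> S _; apply: val_inj => /=; rewrite [in RHS](tuple_eta S).
rewrite -(pair_big xpredT xpredT (fun b (t : k.-tuple bool) => F (b :: t))) /=.
by rewrite big_bool /= addrC -big_split.
Qed.

Lemma sum_tuple0 (R : nmodType) (F : seq bool -> R) :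
  \sum_(S : 0.-tuple bool) F S = F [::].
Proof.
rewrite (big_pred1 [tuple]) //= => t; rewrite tuple0; apply/esym/eqP; exact: tuple0.
Qed.

Lemma sum_tuple_cat (R : nmodType) a b (F : seq bool -> R) :
  \sum_(S : (a + b)%N.-tuple bool) F S =
  \sum_(S1 : a.-tuple bool) \sum_(S2 : b.-tuple bool) F (S1 ++ S2).
Proof.
elim: a F => [|a IH] F.
  by rewrite (sum_tuple0 (fun s => \sum_(S2 : b.-tuple bool) F (s ++ S2))).
rewrite addSn sum_tuple_cons (IH (fun s => F (false :: s) + F (true :: s))).
rewrite (@sum_tuple_cons _ _ (fun s => \sum_(S2 : b.-tuple bool) F (s ++ S2))) /=.
by apply: eq_bigr => S1 _; rewrite -big_split.
Qed.

Lemma sum_tuple_size (R : nmodType) m m' (F : seq bool -> R) : m = m' ->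
  \sum_(S : m.-tuple bool) F S = \sum_(S : m'.-tuple bool) F S.
Proof. by move=> ->. Qed.

Lemma sum_tuple_expr_count (R : pzRingType) (a : R) e :
  \sum_(t : e.-tuple bool) a ^+ count id t = (1 + a) ^+ e.
Proof.
elim: e => [|e IH]; first by rewrite (sum_tuple0 (fun s => a ^+ count id s)) expr0.
rewrite (@sum_tuple_cons _ _ (fun s => a ^+ count id s)) exprS -IH mulr_sumr.
by apply: eq_bigr => t _ /=; rewrite add0n add1n exprS mulrDl mul1r addrC.
Qed.


Lemma svar_neq0 : svar != 0.
Proof. by rewrite /svar /tof tofrac_eq0 polyX_eq0. Qed.

Definition delta : laurent := - (svar + svar^-1).

Definition alt_geom (e : nat) : {poly int} := \sum_(k < e) (- 'X ^+ 2) ^+ k.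

Lemma one_add_svar_delta : 1 + svar * delta = - svar ^+ 2.
Proof.
rewrite /delta mulrN mulrDr mulfV ?svar_neq0 //.
by rewrite opprD addrA addrC addrA addNr add0r expr2.
Qed.

Lemma tof_alt_geomS e : tof (alt_geom e.+1) = tof (alt_geom e) + (- svar ^+ 2) ^+ e.
Proof. by rewrite /alt_geom big_ord_recr /= /tof rmorphD rmorphXn rmorphN rmorphXn. Qed.

Lemma sum_power_states (x y : laurent) e :
  \sum_(t : e.-tuple bool) svar ^+ count id t
     * (if count id t == 0%N then x else delta ^+ (count id t).-1 * y)
  = x + svar * tof (alt_geom e) * y.
Proof.
pose F t := svar ^+ count id t
  * (if count id t == 0%N then x else delta ^+ (count id t).-1 * y).
elim: e => [|e IH].
  by rewrite (sum_tuple0 F) /F /= /alt_geom big_ord0 /tof rmorph0 mul1r mulr0 mul0r addr0.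
rewrite (@sum_tuple_cons _ _ F) big_split /F /= IH tof_alt_geomS -addrA; congr (_ + _).
rewrite mulrDr mulrDl; congr (_ + _).
rewrite -one_add_svar_delta -sum_tuple_expr_count mulr_sumr mulr_suml.
by apply: eq_bigr => t _; rewrite add0n add1n exprS exprMn !mulrA.
Qed.

Definition nneg (w : seq letter) : int := (count (fun l : letter => ~~ l.2) w)%:Z.
Definition npos (w : seq letter) : int := (count (fun l : letter => l.2) w)%:Z.

(* The normalised weight [(-A^3)^{-wr} A^{#A - #B}] of a state, with [A^2 = s]. *)
Definition weight (w : seq letter) (s : seq bool) : laurent :=
  (-1) ^ (nneg w - npos w) * svar ^ ((count id s)%:Z - 2 * nneg w + npos w).

Definition jones_term n w (s : seq bool) : laurent :=
  weight w s * delta ^+ (loops n w s).-1.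

Lemma jones_sum n w : jones n w = \sum_(S : (size w).-tuple bool) jones_term n w S.
Proof. by []. Qed.

Lemma weight_cat w1 w2 s1 s2 :
  weight (w1 ++ w2) (s1 ++ s2) = weight w1 s1 * weight w2 s2.
Proof.
rewrite /weight /nneg /npos !count_cat !PoszD mulrACA.
have sign_neq0 : (-1 : laurent) != 0 by rewrite oppr_eq0 oner_eq0.
rewrite -expfzDr // -[svar ^ _ * _]expfzDr ?svar_neq0 //.
by congr (_ ^ _ * _ ^ _); ring.
Qed.

Lemma weight_power g e tau : size tau = e ->
  weight (nseq e (g, true)) tau = (- svar) ^+ e * svar ^+ count id tau.
Proof.
move=> <-; rewrite /weight /nneg /npos !count_nseq /= mul0n mul1n sub0r.
have -> : (count id tau)%:Z - 2 * 0 + (size tau)%:Z = (count id tau + size tau)%N by lia.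
by rewrite -exprnN invr_sign -exprnP exprD [(- svar) ^+ _]exprNn [svar ^+ _ * _]mulrC mulrA.
Qed.

Lemma loops_gt0 n w s : (0 < loops n.+1 w s)%N.
Proof.
rewrite /loops /n_comp_mem; apply/card_gt0P.
exists (fingraph.root (smgraph n.+1 w s) (ord0, ord0)); rewrite !inE /= andbT.
exact: (roots_root (sym_connect_sym (@smgraph_sym n w s))).
Qed.

Section PowerExpansion.
Variables (n : nat) (al ga : seq letter) (g : nat).
Hypothesis g_bd : (1 <= g <= n)%N.

Definition base_sum : laurent :=
  \sum_(s1 : (size al).-tuple bool) \sum_(s2 : (size ga).-tuple bool)
    weight al s1 * weight ga s2 * delta ^+ (loops n.+1 (al ++ ga) (s1 ++ s2)).-1.

Definition single_sum : laurent :=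
  \sum_(s1 : (size al).-tuple bool) \sum_(s2 : (size ga).-tuple bool)
    weight al s1 * weight ga s2
    * delta ^+ (loops n.+1 (al ++ (g, true) :: ga) (s1 ++ true :: s2)).-1.

Lemma jones_term_power e s1 tau s2 : size s1 = size al -> size tau = e ->
  let w := al ++ nseq e (g, true) ++ ga in
  jones_term n.+1 w (s1 ++ tau ++ s2)
  = (- svar) ^+ e * (weight al s1 * weight ga s2) * (svar ^+ count id tau *
      (if count id tau == 0%N then delta ^+ (loops n.+1 (al ++ ga) (s1 ++ s2)).-1
       else delta ^+ (count id tau).-1
         * delta ^+ (loops n.+1 (al ++ (g, true) :: ga) (s1 ++ true :: s2)).-1)).
Proof.
move=> hs <- w; rewrite /jones_term /w !weight_cat weight_power // loops_power //.
have regroup (a b c d f : laurent) : a * (b * c * d) * f = b * (a * d) * (c * f).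
  by ring.
rewrite regroup; case: eqP => // /eqP ct.
have := loops_gt0 n (al ++ (g, true) :: ga) (s1 ++ true :: s2).
by case: loops => // L _; rewrite addSn /= -exprD addnC.
Qed.

Lemma jones_power e : jones n.+1 (al ++ nseq e (g, true) ++ ga)
  = (- svar) ^+ e * (base_sum + svar * tof (alt_geom e) * single_sum).
Proof.
set w := al ++ nseq e (g, true) ++ ga.
have size_w : size w = (size al + (e + size ga))%N by rewrite !size_cat size_nseq.
rewrite jones_sum (sum_tuple_size (jones_term n.+1 w) size_w) sum_tuple_cat.
rewrite /base_sum /single_sum mulrDr !mulr_sumr -big_split.
apply: eq_bigr => s1 _.
rewrite (@sum_tuple_cat _ _ _ (fun s => jones_term n.+1 w (s1 ++ s))) exchange_big /=.
rewrite mulrA !mulr_sumr -big_split; apply: eq_bigr => s2 _ /=.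
under eq_bigr => tau _ do rewrite jones_term_power ?size_tuple //.
rewrite -mulr_sumr sum_power_states.
have distr (a b c d f : laurent) : a * b * (c + d * f) = a * (b * c) + a * d * (b * f).
  by ring.
exact: distr.
Qed.

End PowerExpansion.

Definition ev2 (P : {poly int}) : 'F_7 := (map_poly (fun z : int => z%:~R) P).[2%:R].

Lemma ev2D P Q : ev2 (P + Q) = ev2 P + ev2 Q.
Proof. by rewrite /ev2 rmorphD hornerD. Qed.

Lemma ev2M P Q : ev2 (P * Q) = ev2 P * ev2 Q.
Proof. by rewrite /ev2 rmorphM hornerM. Qed.

Lemma ev2C (z : int) : ev2 z%:P = z%:~R.
Proof. by rewrite /ev2 map_polyC hornerC. Qed.

Lemma ev2Xn k : ev2 ('X ^+ k) = 2%:R ^+ k.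
Proof. by rewrite /ev2 rmorphXn /= map_polyX hornerXn. Qed.

Lemma two_neq0_F7 : (2%:R : 'F_7) != 0. Proof. by vm_compute. Qed.
Lemma three_neq0_F7 : (1 + 2%:R : 'F_7) != 0. Proof. by vm_compute. Qed.
Lemma inv2_F7 : (2%:R : 'F_7)^-1 = 4%:R.
Proof. by apply: (mulfI two_neq0_F7); rewrite mulfV ?two_neq0_F7 //; apply/eqP; vm_compute. Qed.
Lemma delta_F7 : - (2%:R + 4%:R : 'F_7) = 1. Proof. by apply/eqP; vm_compute. Qed.

Definition evals_to (x : laurent) (c : 'F_7) :=
  exists (N : nat) (P : {poly int}), x * svar ^+ N = tof P /\ ev2 P = c * 2%:R ^+ N.

Lemma evals_to_tof P : evals_to (tof P) (ev2 P).
Proof. by exists 0%N, P; rewrite !expr0 !mulr1. Qed.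

Lemma evals_to_int (z : int) : evals_to (tof z%:P) z%:~R.
Proof. by rewrite -ev2C; apply: evals_to_tof. Qed.

Lemma evals_to_add x y c d : evals_to x c -> evals_to y d -> evals_to (x + y) (c + d).
Proof.
move=> [N [P [hP eP]]] [M [Q [hQ eQ]]]; exists (N + M)%N, (P * 'X ^+ M + Q * 'X ^+ N).
split; last by rewrite ev2D !ev2M !ev2Xn eP eQ exprD; ring.
rewrite /tof rmorphD !rmorphM !rmorphXn /= -[tofrac P]hP -[tofrac Q]hQ exprD /svar /tof.
ring.
Qed.

Lemma evals_to_mul x y c d : evals_to x c -> evals_to y d -> evals_to (x * y) (c * d).
Proof.
move=> [N [P [hP eP]]] [M [Q [hQ eQ]]]; exists (N + M)%N, (P * Q).
split; last by rewrite ev2M eP eQ exprD; ring.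
by rewrite /tof rmorphM /= -[tofrac P]hP -[tofrac Q]hQ exprD; ring.
Qed.

Lemma evals_to_exp x c k : evals_to x c -> evals_to (x ^+ k) (c ^+ k).
Proof.
move=> h; elim: k => [|k IH]; last by rewrite !exprS; apply: evals_to_mul.
by rewrite !expr0; have := evals_to_int 1; rewrite /tof rmorph1.
Qed.

Lemma evals_to_expz x c (z : int) :
  evals_to x c -> evals_to x^-1 c^-1 -> evals_to (x ^ z) (c ^ z).
Proof.
move=> h hV; case: z => k; first exact: evals_to_exp.
by rewrite NegzE -!exprnN -!exprVn; apply: evals_to_exp.
Qed.

Lemma evals_to_sum (I : finType) (F : I -> laurent) (c : I -> 'F_7) :
  (forall i, evals_to (F i) (c i)) -> evals_to (\sum_i F i) (\sum_i c i).
Proof.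
move=> h; apply: (big_rec2 (fun x y => evals_to y x)) => [|i y1 y2 _ hy].
  by have := evals_to_int 0; rewrite /tof rmorph0.
exact: evals_to_add.
Qed.

Lemma evals_to_N1 : evals_to (-1) (-1).
Proof. by have := evals_to_int (-1); rewrite polyCN polyC1 /tof rmorphN1 -[(-1)%:~R]/(- 1%:~R). Qed.

Lemma evals_to_svar : evals_to svar 2%:R.
Proof. by have := evals_to_tof 'X; rewrite /ev2 map_polyX hornerX. Qed.

Lemma evals_to_svarV : evals_to (svar^-1) (2%:R^-1).
Proof.
exists 1%N, 1; split; first by rewrite expr1 mulVf ?svar_neq0 // /tof rmorph1.
by rewrite -(expr0 'X) ev2Xn expr0 expr1 mulVf ?two_neq0_F7.
Qed.

Lemma evals_to_delta : evals_to delta 1.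
Proof.
rewrite -delta_F7 -inv2_F7 /delta -mulN1r -[- (_ + _)]mulN1r.
apply: evals_to_mul; first exact: evals_to_N1.
by apply: evals_to_add; [exact: evals_to_svar | exact: evals_to_svarV].
Qed.

Lemma evals_to_weight w s :
  evals_to (weight w s)
    ((-1) ^ (nneg w - npos w) * 2%:R ^ ((count id s)%:Z - 2 * nneg w + npos w)).
Proof.
apply: evals_to_mul; apply: evals_to_expz.
- exact: evals_to_N1.
- by rewrite !invrN1; apply: evals_to_N1.
- exact: evals_to_svar.
- exact: evals_to_svarV.
Qed.

Lemma evals_to_jones_term n w s :
  evals_to (jones_term n w s)
    ((-1) ^ (nneg w - npos w) * 2%:R ^ ((count id s)%:Z - 2 * nneg w + npos w)).
Proof.
rewrite /jones_term -[X in evals_to _ X]mulr1; apply: evals_to_mul.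
  exact: evals_to_weight.
by rewrite -(expr1n _ (loops n w s).-1); apply: evals_to_exp; apply: evals_to_delta.
Qed.

Lemma evals_to_neq0 x c : evals_to x c -> c != 0 -> x != 0.
Proof.
move=> [N [P [hP eP]]] hc; apply: contra_neq hc => x0.
move: hP; rewrite x0 mul0r => /esym/eqP; rewrite /tof tofrac_eq0 => /eqP P0.
move: eP; rewrite P0 /ev2 rmorph0 horner0 => /esym/eqP.
by rewrite mulf_eq0 expf_eq0 (negbTE two_neq0_F7) andbF orbF => /eqP.
Qed.

(* At [s = 2] over [F_7] the loop value [delta] becomes [1], so the state sum
   collapses to [+-2^k (1 + 2)^m], which is nonzero. *)
Lemma jones_neq0 n w : jones n w != 0.
Proof.
rewrite jones_sum; apply: (evals_to_neq0 (evals_to_sum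
  (fun S : (size w).-tuple bool => evals_to_jones_term n w S))).
set sg : 'F_7 := (-1) ^ (nneg w - npos w).
have -> : \sum_(S : (size w).-tuple bool)
    sg * 2%:R ^ ((count id S)%:Z - 2 * nneg w + npos w)
  = sg * 2%:R ^ (- 2 * nneg w + npos w)
    * \sum_(S : (size w).-tuple bool) (2%:R : 'F_7) ^+ count id S.
  rewrite mulr_sumr; apply: eq_bigr => S _.
  rewrite -mulrA [_ ^+ count id S]exprnP -expfzDr ?two_neq0_F7 //.
  by congr (_ * _ ^ _); ring.
rewrite sum_tuple_expr_count !mulf_neq0 //.
- by rewrite expfz_eq0 negb_and oppr_eq0 oner_eq0 orbT.
- by rewrite expfz_eq0 negb_and two_neq0_F7 orbT.
- by rewrite expf_eq0 (negbTE three_neq0_F7) andbF.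
Qed.

Definition evaluable (x : laurent) := exists c, evals_to x c.

Lemma evaluable_mul x y : evaluable x -> evaluable y -> evaluable (x * y).
Proof. by move=> [c hc] [d hd]; exists (c * d); apply: evals_to_mul. Qed.

Lemma evaluable_sum (I : finType) (F : I -> laurent) :
  (forall i, evaluable (F i)) -> evaluable (\sum_i F i).
Proof.
move=> h; apply: (big_ind evaluable) => // [|x y [c hc] [d hd]].
  by exists 0; have := evals_to_int 0; rewrite /tof rmorph0.
by exists (c + d); apply: evals_to_add.
Qed.

Lemma evaluable_state_sum (al ga : seq letter) (L : seq bool -> seq bool -> nat) :
  evaluable (\sum_(s1 : (size al).-tuple bool) \sum_(s2 : (size ga).-tuple bool)
               weight al s1 * weight ga s2 * delta ^+ L s1 s2).
Proof.
apply: evaluable_sum => s1; apply: evaluable_sum => s2 /=.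
apply: evaluable_mul; first apply: evaluable_mul.
- by eexists; apply: evals_to_weight.
- by eexists; apply: evals_to_weight.
- by eexists; apply: evals_to_exp; apply: evals_to_delta.
Qed.

Lemma alt_geomS k : alt_geom k.+1 = alt_geom k + (- 'X ^+ 2) ^+ k.
Proof. by rewrite /alt_geom big_ord_recr. Qed.

Lemma alt_geomD a d : alt_geom (a + d) = alt_geom a + (- 'X ^+ 2) ^+ a * alt_geom d.
Proof.
elim: d => [|d IH]; first by rewrite addn0 /alt_geom big_ord0 mulr0 addr0.
by rewrite addnS !alt_geomS IH mulrDr addrA exprD.
Qed.

Lemma alt_geomS_neq0 d : alt_geom d.+1 != 0.
Proof.
have := alt_geomD 1 d; rewrite add1n /alt_geom big_ord1 expr0 => ->.
by apply/eqP => /(congr1 (horner^~ 0)) /eqP; rewrite !hornerE oner_eq0.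
Qed.

(* Two distinct values of [k] give distinct [alt_geom k], so at most one [k]
   can make the combination vanish. *)
Lemma alt_geom_comb_eventually_neq0 (B E : {poly int}) : B != 0 \/ E != 0 ->
  exists K : nat, forall k, (K <= k)%N -> B + 'X * alt_geom k * E != 0.
Proof.
move=> nz; have [E0|E_neq0] := eqVneq E 0.
  by exists 0%N => k _; rewrite E0 mulr0 addr0; case: nz => //; rewrite E0 eqxx.
case: (classic (exists k0, B + 'X * alt_geom k0 * E = 0)) => [[k0 hk0]|none]; last first.
  by exists 0%N => k _; apply/eqP => hk; apply: none; exists k.
exists k0.+1 => k hk; apply/eqP.
have -> : k = (k0 + (k - k0).-1.+1)%N by lia.
rewrite alt_geomD mulrDr mulrDl addrA hk0 add0r => /eqP.
rewrite !mulf_eq0 polyX_eq0 (negbTE E_neq0) (negbTE (alt_geomS_neq0 _)) orbF /=.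
by rewrite expf_eq0 oppr_eq0 expf_eq0 polyX_eq0 !andbF.
Qed.

Lemma tof_shift (P : {poly int}) (m N : nat) : (N <= m)%N ->
  tof ('X ^+ m * P) = tof ('X ^+ (m - N) * P) * svar ^+ N.
Proof.
move=> le_Nm; rewrite /svar /tof -rmorphXn -rmorphM.
by rewrite mulrAC -exprD subnK.
Qed.

Lemma is_poly_in_s_shift L (N m : nat) P : (N <= m)%N ->
  L * svar ^+ N = tof ('X ^+ m * P) -> is_poly_in_s L.
Proof.
move=> le_Nm hL; exists ('X ^+ (m - N) * P).
by apply: (mulIf (expf_neq0 N svar_neq0)); rewrite hL (tof_shift _ le_Nm).
Qed.

Lemma has_sdeg_shift L (N m : nat) P : P != 0 ->
  L * svar ^+ N = tof ('X ^+ m * P) ->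
  has_sdeg L (m%:Z - N%:Z + ((size P)%:Z - 1)).
Proof.
move=> P_neq0 hL; exists P, (m%:Z - N%:Z); split => //.
apply: (mulIf (expf_neq0 N svar_neq0)); rewrite hL mulrAC (exprnP svar N).
rewrite -expfzDr ?svar_neq0 // subrK -exprnP.
by rewrite /tof /svar /tof rmorphM rmorphXn.
Qed.

(* Clearing the denominators of [base_sum] and [single_sum] in [jones_power]. *)
Lemma jones_power_normal_form n al ga g : (1 <= g <= n)%N ->
  exists (N : nat) (B E : {poly int}), (B != 0 \/ E != 0) /\
    forall m : nat, jones n.+1 (al ++ nseq m (g, true) ++ ga) * svar ^+ N
      = tof ('X ^+ m * ((-1) ^+ m * (B + 'X * alt_geom m * E))).
Proof.
move=> g_bd.
have [cB [NB [B0 [hB _]]]] := evaluable_state_sum al ga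
  (fun s1 s2 => (loops n.+1 (al ++ ga) (s1 ++ s2)).-1).
have [cE [NE [E0 [hE _]]]] := evaluable_state_sum al ga
  (fun s1 s2 => (loops n.+1 (al ++ (g, true) :: ga) (s1 ++ true :: s2)).-1).
rewrite -/(base_sum n al ga) in hB; rewrite -/(single_sum n al ga g) in hE.
exists (NB + NE)%N, (B0 * 'X ^+ NE), (E0 * 'X ^+ NB); split.
  have := jones_neq0 n.+1 (al ++ nseq 0 (g, true) ++ ga).
  rewrite jones_power // expr0 mul1r /alt_geom big_ord0 /tof rmorph0 mulr0 mul0r addr0.
  move=> base_neq0; left; rewrite mulf_neq0 ?expf_neq0 ?polyX_eq0 //.
  apply: contra_neq base_neq0 => B00; apply: (mulIf (expf_neq0 NB svar_neq0)).
  by rewrite hB B00 mul0r /tof rmorph0.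
move=> m.
have -> : tof ('X ^+ m * ((-1) ^+ m * (B0 * 'X ^+ NE + 'X * alt_geom m * (E0 * 'X ^+ NB))))
    = (- svar) ^+ m * (tof B0 * svar ^+ NE + svar * tof (alt_geom m) * (tof E0 * svar ^+ NB)).
  rewrite /tof /svar /tof !(rmorphM, rmorphXn, rmorphD, rmorphN, rmorph1).
  by rewrite [in RHS]exprNn mulrCA mulrA.
rewrite jones_power // -hB -hE exprD; ring.
Qed.

Lemma enum_ord_split k (j : 'I_k) :
  enum 'I_k = take j (enum 'I_k) ++ j :: drop j.+1 (enum 'I_k).
Proof.
rewrite -{1}(cat_take_drop j (enum 'I_k)) (drop_nth j) ?size_enum_ord ?ltn_ord //.
by rewrite nth_ord_enum.
Qed.

Lemma bword_split k (i : 'I_k -> nat) (j : 'I_k) (a : 'I_k -> int) (m : nat) :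
  bword i (fun h => if h == j then m%:Z else a h) =
  flatten [seq gpow (i h) (a h) | h <- take j (enum 'I_k)] ++ nseq m (i j, true) ++
  flatten [seq gpow (i h) (a h) | h <- drop j.+1 (enum 'I_k)].
Proof.
have := enum_uniq 'I_k; rewrite [in X in uniq X](enum_ord_split j) cat_uniq /=.
case/and4P => _ /norP [j_notin_take _] j_notin_drop _.
rewrite /bword {1}(enum_ord_split j) map_cat flatten_cat /= eqxx.
congr (flatten _ ++ _ ++ flatten _); apply/eq_in_map => h hh /=.
- by case: eqP => // ehj; subst h; rewrite hh in j_notin_take.
- by case: eqP => // ehj; subst h; rewrite hh in j_notin_drop.
Qed.

Theorem proposition1p4 (n k : nat) (i : 'I_k -> nat) (j : 'I_k) (a : 'I_k -> int) :
  (2 <= n)%N ->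
  (forall h, (1 <= i h <= n.-1)%N) ->
  let V := fun e : int => jones n (bword i (fun h => if h == j then e else a h)) in
  (exists E : int, forall e : int, E <= e -> is_poly_in_s (V e)) /\
  (forall M : int, exists E : int, forall e : int, E <= e ->
      exists d : int, has_sdeg (V e) d /\ M <= d).
Proof.
case: n => [|n] // _ i_bd V.
set al := flatten [seq gpow (i h) (a h) | h <- take j (enum 'I_k)].
set ga := flatten [seq gpow (i h) (a h) | h <- drop j.+1 (enum 'I_k)].
have V_nat (m : nat) : V m%:Z = jones n.+1 (al ++ nseq m (i j, true) ++ ga).
  by rewrite /V bword_split.
have [N [B [E [nz normal]]]] := @jones_power_normal_form n al ga (i j) (i_bd j).
have [K hK] := alt_geom_comb_eventually_neq0 nz.
split.
  exists N%:Z => -[m|//]; rewrite lez_nat => le_Nm.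
  by apply: (is_poly_in_s_shift le_Nm); rewrite V_nat; apply: normal.
move=> M; exists (K + N + `|M|)%N%:Z => -[m|//]; rewrite lez_nat => hm.
set P := (-1) ^+ m * (B + 'X * alt_geom m * E).
have P_neq0 : P != 0 by rewrite mulf_neq0 ?signr_eq0 // hK //; lia.
eexists; split; first by apply: (has_sdeg_shift P_neq0); rewrite V_nat; apply: normal.
have : (0 < size P)%N by rewrite size_poly_gt0.
by move: (size P) => sz; lia.
Qed.
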